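(* There is a signature $\tau$ and a first-order sentence $\varphi$ over $\tau$ such that $\varphi$ is preserved under globally-homomorphic preimages in the finite (for all finite $\tau$-structures $\mathcal{A},\mathcal{B}$, if $\mathcal{A}\Rightarrow\mathcal{B}$ and $\mathcal{B}\models\varphi$ then $\mathcal{A}\models\varphi$), but $\varphi$ is not equivalent over finite structures to any finite set of generalized dependencies.
   Context: Signatures are relational (constant and relation symbols). A generalized dependency (GD) is a sentence $\forall\vec{x}(\phi(\vec{x})\rightarrow\exists\vec{y}(\psi_1\vee\cdots\vee\psi_n))$, $n\ge0$, with $\phi,\psi_i$ conjunctions of atomic formulas (equalities allowed; for $n=0$ the head is $\bot$). For $a_1,\dots,a_k\in A$, $(\mathcal{A},a_1,\dots,a_k)$ is the expansion interpreting fresh constant symbols as $a_1,\dots,a_k$. $\mathcal{A}\rightleftarrows\mathcal{B}$ means there are homomorphisms (maps preserving constants and relations) in both directions. $\mathcal{A}\Rightarrow\mathcal{B}$ means there is a function $\pi$ mapping every finite tuple $\vec a$ over $A$ to a tuple $\pi(\vec a)$ over $B$ of the same length with $(\mathcal{A},\vec{a})\rightleftarrows(\mathcal{B},\pi(\vec{a}))$. ''Equivalent over finite structures'' means having the same finite models. *)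

From mathcomp Require Import all_boot.
From Stdlib Require List.
Set Implicit Arguments. Unset Strict Implicit. Unset Printing Implicit Defensive.

Record signature := Signature {
  nconst : nat;
  nrel : nat;
  arity : 'I_nrel -> nat
}.

Record fstructure (s : signature) := FStructure {
  carrier :> finType;
  cst : 'I_(nconst s) -> carrier;
  rel : forall r : 'I_(nrel s), ('I_(arity r) -> carrier) -> Prop
}.
Arguments cst {s} f _ : rename.
Arguments rel {s} f r _ : rename.

Definition nonempty_struct s (A : fstructure s) : Prop := 0 < #|A|.

Definition is_hom s (A B : fstructure s) (h : A -> B) : Prop :=
  (forall c, h (cst A c) = cst B c) /\
  (forall r (t : 'I_(arity r) -> A), rel A r t -> rel B r (fun i => h (t i))).

(* hom from (A, a_1..a_k) to (B, b_1..b_k): fresh constants interpreted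
   as the a_i resp. b_i must be preserved *)
Definition hom_exp s (A B : fstructure s) k (a : 'I_k -> A) (b : 'I_k -> B) : Prop :=
  exists h : A -> B, is_hom h /\ forall i, h (a i) = b i.

Definition hom_equiv s (A B : fstructure s) k (a : 'I_k -> A) (b : 'I_k -> B) : Prop :=
  hom_exp a b /\ hom_exp b a.

Definition glob_hom s (A B : fstructure s) : Prop :=
  exists pi : forall k, ('I_k -> A) -> ('I_k -> B),
    forall k (a : 'I_k -> A), hom_equiv a (pi k a).

Inductive term (s : signature) (V : Type) :=
| TVar : V -> term s V
| TConst : 'I_(nconst s) -> term s V.

Inductive formula (s : signature) :=
| FFalse : formula s
| FRel : forall r : 'I_(nrel s), ('I_(arity r) -> term s nat) -> formula s
| FEq : term s nat -> term s nat -> formula s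
| FNot : formula s -> formula s
| FAnd : formula s -> formula s -> formula s
| FOr : formula s -> formula s -> formula s
| FImp : formula s -> formula s -> formula s
| FForall : nat -> formula s -> formula s
| FExists : nat -> formula s -> formula s.

Definition eval_term s (A : fstructure s) V (rho : V -> A) (t : term s V) : A :=
  match t with TVar v => rho v | TConst c => cst A c end.

Definition upd (T : Type) (rho : nat -> T) (x : nat) (a : T) : nat -> T :=
  fun y => if y == x then a else rho y.

Fixpoint sat s (A : fstructure s) (rho : nat -> A) (phi : formula s) : Prop :=
  match phi with
  | FFalse => False
  | FRel r t => rel A r (fun i => eval_term rho (t i))
  | FEq t1 t2 => eval_term rho t1 = eval_term rho t2
  | FNot p => ~ @sat s A rho p
  | FAnd p q => @sat s A rho p /\ @sat s A rho q
  | FOr p q => @sat s A rho p \/ @sat s A rho q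
  | FImp p q => @sat s A rho p -> @sat s A rho q
  | FForall x p => forall a : A, @sat s A (upd rho x a) p
  | FExists x p => exists a : A, @sat s A (upd rho x a) p
  end.

Definition term_has_var s (x : nat) (t : term s nat) : bool :=
  match t with TVar y => y == x | TConst _ => false end.

Fixpoint free_in s (x : nat) (phi : formula s) : bool :=
  match phi with
  | FFalse => false
  | FRel r t => [exists i, term_has_var x (t i)]
  | FEq t1 t2 => term_has_var x t1 || term_has_var x t2
  | FNot p => @free_in s x p
  | FAnd p q | FOr p q | FImp p q => @free_in s x p || @free_in s x q
  | FForall y p | FExists y p => (y != x) && @free_in s x p
  end.

Definition sentence s (phi : formula s) : Prop := forall x, ~~ free_in x phi.

Definition models s (A : fstructure s) (phi : formula s) : Prop :=
  forall rho : nat -> A, @sat s A rho phi.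

Inductive atom (s : signature) (V : Type) :=
| ARel : forall r : 'I_(nrel s), ('I_(arity r) -> term s V) -> atom s V
| AEq : term s V -> term s V -> atom s V.

Definition sat_atom s (A : fstructure s) V (rho : V -> A) (alpha : atom s V) : Prop :=
  match alpha with
  | ARel r t => rel A r (fun i => eval_term rho (t i))
  | AEq t1 t2 => eval_term rho t1 = eval_term rho t2
  end.

(* forall x_1..x_nx ( /\ body -> exists y_1..y_ny ( \/_j /\ heads_j ) );
   body and each head are conjunctions (lists) of atoms; heads = [::] is bot. *)
Record gd (s : signature) := GD {
  gd_nx : nat;
  gd_ny : nat;
  gd_body : seq (atom s 'I_gd_nx);
  gd_heads : seq (seq (atom s ('I_gd_nx + 'I_gd_ny)%type))
}.

Definition sat_gd s (A : fstructure s) (g : gd s) : Prop :=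
  forall a : 'I_(gd_nx g) -> A,
    (forall alpha, List.In alpha (gd_body g) -> sat_atom a alpha) ->
    exists b : 'I_(gd_ny g) -> A,
      exists2 psi, List.In psi (gd_heads g) &
        forall alpha, List.In alpha psi ->
          sat_atom (fun v => match v with inl i => a i | inr j => b j end) alpha.

Definition models_gds s (A : fstructure s) (Sigma : seq (gd s)) : Prop :=
  forall g, List.In g Sigma -> sat_gd A g.

Definition preserved_glob_hom_preimages s (phi : formula s) : Prop :=
  forall A B : fstructure s, nonempty_struct A -> nonempty_struct B ->
    glob_hom A B -> models B phi -> models A phi.

Definition fin_equiv_gds s (phi : formula s) (Sigma : seq (gd s)) : Prop :=
  forall A : fstructure s, nonempty_struct A -> (models A phi <-> models_gds A Sigma).

(** The witness is [phi := exists x, forall y, E x y]: "some vertex dominates every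
    vertex (itself included)".

    Preservation: applying [A => B] to an enumeration of all of [A] yields a
    homomorphism [B -> A] that is surjective, and a surjective homomorphism maps a
    dominating vertex to a dominating vertex.

    No finite set [Sigma] of GDs is equivalent: let [N] bound the number of
    universal variables of the GDs in [Sigma].  On [{0..N} * bool] put
    [(m,b) E (m',b')] iff [m <> m' \/ b = b'] to get a graph [A], and let [B] be
    [A] with an apex (a vertex adjacent to everything) added.  [B] satisfies [phi] and [A]
    does not, yet [A] satisfies every GD that [B] satisfies: a tuple of at most
    [N] vertices of [A] misses some first coordinate [m0], so collapsing every
    other vertex of [B] onto [(m0, false)] is a homomorphism [B -> A] that
    retracts the inclusion [A -> B] on the tuple. *)
From Pilot Require Import Defs.
From mathcomp Require Import all_boot.
From Stdlib Require Import FunctionalExtensionality.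
Set Implicit Arguments. Unset Strict Implicit. Unset Printing Implicit Defensive.

Section Homomorphisms.

Variable s : signature.

Lemma eval_term_hom (A B : fstructure s) (h : A -> B) V (rho : V -> A) (t : term s V) :
  is_hom h -> eval_term (fun v => h (rho v)) t = h (eval_term rho t).
Proof. by case=> hcst _; case: t => [v|c] //=; rewrite hcst. Qed.

Lemma sat_atom_hom (A B : fstructure s) (h : A -> B) V (rho : V -> A) (alpha : atom s V) :
  is_hom h -> sat_atom rho alpha -> sat_atom (fun v => h (rho v)) alpha.
Proof.
move=> hom_h; case: alpha => [r t|t1 t2] /=; last by rewrite !eval_term_hom // => ->.
move/(proj2 hom_h r); congr (Defs.rel B r _).
by apply: functional_extensionality => i; rewrite eval_term_hom.
Qed.

Definition sat_gd_at (A : fstructure s) (G : gd s) (a : 'I_(gd_nx G) -> A) : Prop :=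
  (forall alpha, List.In alpha (gd_body G) -> sat_atom a alpha) ->
  exists b : 'I_(gd_ny G) -> A,
    exists2 psi, List.In psi (gd_heads G) &
      forall alpha, List.In alpha psi ->
        sat_atom (fun v => match v with inl i => a i | inr j => b j end) alpha.

(* The body is pushed forward along [f], the head witnesses pulled back along [g]. *)
Lemma sat_gd_at_retract (A B : fstructure s) (f : A -> B) (g : B -> A)
    (G : gd s) (a : 'I_(gd_nx G) -> A) :
  is_hom f -> is_hom g -> (forall i, g (f (a i)) = a i) ->
  sat_gd B G -> sat_gd_at a.
Proof.
move=> hom_f hom_g gfa satB body_a.
have [b [psi psi_in psi_sat]] :=
  satB (fun i => f (a i)) (fun alpha al_in => sat_atom_hom hom_f (body_a alpha al_in)).
exists (fun j => g (b j)), psi => // alpha al_in.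
have := sat_atom_hom hom_g (psi_sat alpha al_in).
congr (sat_atom _ alpha); apply: functional_extensionality => -[i|j] /=.
- by rewrite gfa.
- by [].
Qed.

Lemma glob_hom_surjective_hom (A B : fstructure s) :
  glob_hom A B -> exists g : B -> A, is_hom g /\ forall x, exists y, g y = x.
Proof.
case=> pi pi_equiv; pose all_A (i : 'I_#|A|) : A := enum_val i.
have [_ [g [hom_g g_pi]]] := pi_equiv _ all_A.
by exists g; split=> // x; exists (pi _ all_A (enum_rank x)); rewrite g_pi /all_A enum_rankK.
Qed.

End Homomorphisms.

Definition graph_sig : signature := @Signature 0 1 (fun _ => 2).

Definition edge : 'I_(nrel graph_sig) := ord0.

Definition pair_at (T : Type) (x y : T) : 'I_2 -> T :=
  fun i => if val i == 0 then x else y.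

Definition dominating (A : fstructure graph_sig) (x : A) : Prop :=
  forall y, Defs.rel A edge (pair_at x y).

Definition has_dominating : formula graph_sig :=
  FExists 0 (FForall 1 (@FRel graph_sig edge (pair_at (TVar _ 0) (TVar _ 1)))).

Lemma has_dominating_sentence : sentence has_dominating.
Proof.
move=> [|[|x]] //=; apply/negP => /existsP [i].
by rewrite /pair_at; case: (val i == 0).
Qed.

Lemma models_has_dominating (A : fstructure graph_sig) (x0 : A) :
  models A has_dominating <-> exists x : A, dominating x.
Proof.
have eval_pair (rho : nat -> A) x y :
    (fun i => eval_term (upd (upd rho 0 x) 1 y) (pair_at (TVar _ 0) (TVar _ 1) i))
    = pair_at x y.
  by apply: functional_extensionality => i; rewrite /pair_at; case: (val i == 0).
split=> [/(_ (fun _ => x0)) [x dom_x] | [x dom_x] rho]; exists x => y.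
- by have := dom_x y; rewrite /= eval_pair.
- by rewrite /= eval_pair.
Qed.

Lemma dominating_surjective_hom (A B : fstructure graph_sig) (g : B -> A) (x : B) :
  is_hom g -> (forall y, exists z, g z = y) -> dominating x -> dominating (g x).
Proof.
move=> [_ hom_g] g_onto dom_x y; have [z <-] := g_onto y.
have := hom_g edge _ (dom_x z); congr (Defs.rel A edge _).
by apply: functional_extensionality => i; rewrite /pair_at; case: (val i == 0).
Qed.

Lemma has_dominating_preserved : preserved_glob_hom_preimages has_dominating.
Proof.
move=> A B _ /card_gt0P [y0 _] /glob_hom_surjective_hom [g [hom_g g_onto]].
move=> /(models_has_dominating y0) [x dom_x]; apply/(models_has_dominating (g x)).
by exists (g x); apply: dominating_surjective_hom.
Qed.

Definition no_const (T : Type) (c : 'I_0) : T := False_rect T (notF (ltn_ord c)).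

Definition graph_struct (T : finType) (E : rel T) : fstructure graph_sig :=
  @FStructure graph_sig T (@no_const T) (fun _ t => E (t ord0) (t ord_max)).

Lemma graph_hom (T U : finType) (E : rel T) (F : rel U) (h : T -> U) :
  {homo h : x y / E x y >-> F x y} -> is_hom (A := graph_struct E) (B := graph_struct F) h.
Proof. by move=> hom_h; split=> [[]|r t /hom_h]. Qed.

Section Apex.

Variables (T : finType) (E : rel T).

Definition add_apex : rel (option T) :=
  fun x y => if (x, y) is (Some x', Some y') then E x' y' else true.

Lemma apex_dominating : models (graph_struct add_apex) has_dominating.
Proof. by apply/(@models_has_dominating (graph_struct add_apex) None); exists None => -[]. Qed.

Lemma apex_Some_hom : is_hom (A := graph_struct E) (B := graph_struct add_apex) Some.
Proof. exact: graph_hom. Qed.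

Definition collapse (S : pred T) (v : T) (x : option T) : T :=
  if x is Some x' then (if S x' then x' else v) else v.

Lemma collapse_hom (S : pred T) (v : T) :
  E v v -> {in S, forall x, E x v && E v x} ->
  is_hom (A := graph_struct add_apex) (B := graph_struct E) (collapse S v).
Proof.
move=> Evv Sv; apply: graph_hom => -[x|] [y|] //= Exy.
- case Sx: (S x); case Sy: (S y) => //; first by case/andP: (Sv x Sx).
  by case/andP: (Sv y Sy).
- by case Sx: (S x) => //; case/andP: (Sv x Sx).
- by case Sy: (S y) => //; case/andP: (Sv y Sy).
Qed.

End Apex.

Definition co_matching_rel N : rel ('I_N.+1 * bool) :=
  fun p q => (p.1 != q.1) || (p.2 == q.2).
Arguments co_matching_rel : clear implicits.

Definition co_matching N := graph_struct (co_matching_rel N).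

Lemma co_matching_no_dominating N : ~ models (co_matching N) has_dominating.
Proof.
move/(@models_has_dominating (co_matching N) (ord0, false)) => [[m b]] /(_ (m, ~~ b)).
by rewrite /= /co_matching_rel /= eqxx; case: b.
Qed.

Lemma exists_not_in_codom (U : finType) k (f : 'I_k -> U) :
  k < #|U| -> exists x, x \notin codom f.
Proof.
move=> k_lt; apply/existsP; rewrite -negb_forall; apply: contraTN k_lt => /forallP all_in.
rewrite -leqNgt -[k]card_ord -(size_codom f); apply: leq_trans (card_size _).
by apply/subset_leq_card/subsetP => x _; exact: all_in.
Qed.

Lemma co_matching_retraction N k (a : 'I_k -> co_matching N) : k <= N ->
  exists g : option ('I_N.+1 * bool) -> 'I_N.+1 * bool,
    is_hom (A := graph_struct (add_apex (co_matching_rel N))) (B := co_matching N) g /\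
    forall i, g (Some (a i)) = a i.
Proof.
move=> k_le; have [m0 m0_fresh] : exists m0, m0 \notin codom (fun i => (a i).1).
  by apply: exists_not_in_codom; rewrite card_ord.
exists (collapse (mem (codom a)) (m0, false)); split.
- apply: collapse_hom; first by rewrite /co_matching_rel eqxx orbT.
  move=> _ /codomP [i ->].
  have fresh_i : (a i).1 != m0 by apply: contraNneq m0_fresh => <-; exact: codom_f.
  by rewrite /co_matching_rel /=; apply/andP; split; apply/orP; left; rewrite // eq_sym.
- by move=> i; rewrite /= codom_f.
Qed.

Lemma In_leq_bigmax (U : Type) (F : U -> nat) (r : seq U) x :
  List.In x r -> F x <= \max_(y <- r) F y.
Proof.
elim: r => //= y r IH [->|/IH x_le]; rewrite big_cons; first exact: leq_maxl.
exact: leq_trans x_le (leq_maxr _ _).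
Qed.

Theorem theorem2 :
  exists (s : signature) (phi : formula s),
    sentence phi /\
    preserved_glob_hom_preimages phi /\
    ~ (exists Sigma : seq (gd s), fin_equiv_gds phi Sigma).
Proof.
exists graph_sig, has_dominating; split; first exact: has_dominating_sentence.
split; first exact: has_dominating_preserved.
move=> [Sigma equiv_Sigma].
pose N := \max_(G <- Sigma) gd_nx G.
pose B := graph_struct (add_apex (co_matching_rel N)).
have A_ne : nonempty_struct (co_matching N) by apply/card_gt0P; exists (ord0, false).
have B_ne : nonempty_struct B by apply/card_gt0P; exists None.
have B_Sigma : models_gds B Sigma by apply/equiv_Sigma => //; exact: apex_dominating.
apply: (@co_matching_no_dominating N); apply/equiv_Sigma => // G G_in a.
have [g [hom_g g_a]] := co_matching_retraction a (In_leq_bigmax (@gd_nx _) G_in).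
exact: sat_gd_at_retract (apex_Some_hom _) hom_g g_a (B_Sigma G G_in).
Qed.
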